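(* Let $X\subseteq\mathbb{R}^n$ be nonempty, closed and convex; let $F:X\to\mathbb{R}^n$ be $L_F$-Lipschitz continuous and monotone on $X$; let $H:X\to\mathbb{R}^n$ be $L_H$-Lipschitz continuous and monotone on $X$; and assume $\mathrm{SOL}(\mathrm{SOL}(X,F),H)\neq\emptyset$. Let $\gamma>0$, let $\{\eta_k\}$ be positive scalars, let $x_0\in X$, and for $k\ge0$ define $y_{k+1}=\Pi_X[x_k-\gamma(F(x_k)+\eta_kH(x_k))]$, $x_{k+1}=\Pi_X[x_k-\gamma(F(y_{k+1})+\eta_kH(y_{k+1}))]$. Then for any $x\in X$: (i) For all $k\ge0$, $\|x_{k+1}-x\|^2\le\|x_k-x\|^2-\|y_{k+1}-x_k\|^2+2\gamma^2(L_F^2+\eta_k^2L_H^2)\|y_{k+1}-x_k\|^2+2\gamma(F(y_{k+1})+\eta_kH(y_{k+1}))^\top(x-y_{k+1})$. (ii) If $\gamma^2(L_F^2+\eta_k^2L_H^2)\le0.5$ for all $k\ge0$, then for all $k\ge0$, $2\gamma(F(x)+\eta_kH(x))^\top(y_{k+1}-x)\le\|x_k-x\|^2-\|x_{k+1}-x\|^2$. (iii) If $\gamma^2(L_F^2+\eta_k^2L_H^2)\le0.5$ for all $k\ge0$ and moreover $H=\nabla f$ where $f$ is convex and $L$-smooth, then for all $k\ge0$, $2\gamma F(x)^\top(y_{k+1}-x)+2\gamma\eta_k(f(y_{k+1})-f(x))\le\|x_k-x\|^2-\|x_{k+1}-x\|^2$.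
   Context: $\mathrm{SOL}(Y,G)=\{x\in Y: G(x)^\top(y-x)\ge0\ \forall y\in Y\}$; $\Pi_X$ is the Euclidean projection onto $X$. $L$-smooth means continuously differentiable with $L$-Lipschitz gradient (in (iii), $L_H=L$). *)

From HB Require Import structures.
From mathcomp Require Import all_boot all_order all_algebra.
From mathcomp Require Import all_classical all_reals all_analysis.
Set Implicit Arguments. Unset Strict Implicit. Unset Printing Implicit Defensive.
Import Order.TTheory GRing.Theory Num.Theory.
Import numFieldNormedType.Exports.
Local Open Scope classical_set_scope.
Local Open Scope ring_scope.

Section Defs.
Variables (R : realType) (n : nat).
Notation V := 'rV[R]_n.

Definition dotp (u v : V) : R := \sum_(i < n) u ord0 i * v ord0 i.
Definition enorm (u : V) : R := Num.sqrt (dotp u u).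

Definition Convex_set (X : set V) : Prop :=
  forall x y t, X x -> X y -> 0 <= t <= 1 -> X (t *: x + (1 - t) *: y).

Definition Lipschitz_on (Y : set V) (G : V -> V) (L : R) : Prop :=
  forall x y, Y x -> Y y -> enorm (G x - G y) <= L * enorm (x - y).

Definition Monotone_on (Y : set V) (G : V -> V) : Prop :=
  forall x y, Y x -> Y y -> 0 <= dotp (G x - G y) (x - y).

Definition SOL (Y : set V) (G : V -> V) : set V :=
  [set x | Y x /\ forall y, Y y -> 0 <= dotp (G x) (y - x)].

Definition is_projection (X : set V) (P : V -> V) : Prop :=
  forall z, X (P z) /\ forall y, X y -> enorm (z - P z) <= enorm (z - y).

Definition is_gradient (f : V -> R) (g : V -> V) : Prop :=
  forall x, differentiable f x /\ forall v, 'd f x v = dotp (g x) v.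

Definition Convex_fun (f : V -> R) : Prop :=
  forall x y t, 0 <= t <= 1 ->
    f (t *: x + (1 - t) *: y) <= t * f x + (1 - t) * f y.

End Defs.

From HB Require Import structures.
From mathcomp Require Import all_boot all_order all_algebra.
From mathcomp Require Import all_classical all_reals all_analysis.
From mathcomp Require Import ring lra.
Import Order.TTheory GRing.Theory Num.Theory.
Import numFieldNormedType.Exports.
Local Open Scope classical_set_scope.
Local Open Scope ring_scope.
Set Implicit Arguments. Unset Strict Implicit. Unset Printing Implicit Defensive.

(* The projection onto X is characterised by (z - P z)^T (y - P z) <= 0 for
   y in X. Applied to both projections of an extragradient step and combined
   with Young's inequality, this gives (i), where the error term
   gamma^2 ||G y_{k+1} - G x_k||^2 for G = F + eta_k H is controlled by the
   Lipschitz constants of F and H. Under the step-size condition that term is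
   at most ||y_{k+1} - x_k||^2, and monotonicity (for (ii)) or the gradient
   inequality of the convex f (for (iii)) bounds G(y_{k+1})^T (x - y_{k+1}). *)

(* An identity between inner products holds coordinatewise, so it suffices
   to merge every [dotp] into a single sum and check the summands by [ring]. *)
Ltac dotp_ring :=
  rewrite /dotp;
  do ?[rewrite mulr_sumr | rewrite mulr_suml | rewrite -sumrN | rewrite -big_split];
  apply: eq_bigr => i _ /=; rewrite !mxE; ring.

Section EuclideanGeometry.
Variables (R : realType) (n : nat).
Notation V := 'rV[R]_n.
Implicit Types (u v x y : V) (Y : set V).

Lemma dotpp_ge0 u : 0 <= dotp u u.
Proof. by apply: sumr_ge0 => i _; rewrite -expr2 sqr_ge0. Qed.

Lemma enorm_sqr u : enorm u ^+ 2 = dotp u u.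
Proof. by rewrite /enorm sqr_sqrtr // dotpp_ge0. Qed.

Lemma enorm_le_sqr u (k : R) : enorm u <= k -> dotp u u <= k ^+ 2.
Proof.
move=> le_uk; rewrite -enorm_sqr !expr2.
by apply: ler_pM => //; exact: sqrtr_ge0.
Qed.

Lemma dotpp_add_le u v : dotp (u + v) (u + v) <= 2 * dotp u u + 2 * dotp v v.
Proof.
have -> : dotp (u + v) (u + v) = 2 * dotp u u + 2 * dotp v v - dotp (u - v) (u - v).
  by dotp_ring.
by have := dotpp_ge0 (u - v); lra.
Qed.

Lemma Lipschitz_on_sqr Y (G : V -> V) L u v : Lipschitz_on Y G L -> Y u -> Y v ->
  dotp (G u - G v) (G u - G v) <= L ^+ 2 * dotp (u - v) (u - v).
Proof.
by move=> lipG Yu Yv; rewrite -[dotp (u - v) _]enorm_sqr -exprMn; apply/enorm_le_sqr/lipG.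
Qed.

Lemma Lipschitz_on_addZ_sqr Y (F H : V -> V) LF LH (eta : R) u v :
  Lipschitz_on Y F LF -> Lipschitz_on Y H LH -> Y u -> Y v ->
  dotp (F u + eta *: H u - (F v + eta *: H v)) (F u + eta *: H u - (F v + eta *: H v))
    <= 2 * (LF ^+ 2 + eta ^+ 2 * LH ^+ 2) * dotp (u - v) (u - v).
Proof.
move=> lipF lipH Yu Yv.
have -> : F u + eta *: H u - (F v + eta *: H v) = F u - F v + eta *: (H u - H v).
  by apply/rowP => i; rewrite !mxE; ring.
apply: le_trans (dotpp_add_le _ _) _.
have -> : dotp (eta *: (H u - H v)) (eta *: (H u - H v))
          = eta ^+ 2 * dotp (H u - H v) (H u - H v) by dotp_ring.
have sqrF := Lipschitz_on_sqr lipF Yu Yv.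
have := ler_wpM2l (sqr_ge0 eta) (Lipschitz_on_sqr lipH Yu Yv).
lra.
Qed.

Lemma Monotone_on_addZ Y (F H : V -> V) (eta : R) :
  Monotone_on Y F -> Monotone_on Y H -> 0 <= eta ->
  Monotone_on Y (fun z => F z + eta *: H z).
Proof.
move=> monoF monoH eta_ge0 x y Yx Yy.
have -> : dotp (F x + eta *: H x - (F y + eta *: H y)) (x - y)
          = dotp (F x - F y) (x - y) + eta * dotp (H x - H y) (x - y) by dotp_ring.
by rewrite addr_ge0 ?mulr_ge0 ?monoF ?monoH.
Qed.

Lemma Monotone_on_dotp_le Y (G : V -> V) x y : Monotone_on Y G -> Y x -> Y y ->
  dotp (G y) (x - y) <= - dotp (G x) (y - x).
Proof.
move=> monoG Yx Yy; have := monoG y x Yy Yx.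
have -> : dotp (G y - G x) (y - x) = - dotp (G y) (x - y) - dotp (G x) (y - x).
  by dotp_ring.
lra.
Qed.

End EuclideanGeometry.

Lemma le0_quadratic_bound (R : realFieldType) (a b : R) :
  (forall t, 0 < t <= 1 -> 2 * t * a <= t ^+ 2 * b) -> a <= 0.
Proof.
move=> bound; rewrite leNgt; apply/negP => a_gt0.
have two_a_le_b : 2 * a <= b.
  by have := bound 1; rewrite ltr01 lexx mulr1 expr1n mul1r; apply.
have b_gt0 : 0 < b by lra.
pose t := a / b.
have tb : t * b = a by rewrite divfK ?gt_eqF.
have t_gt0 : 0 < t by exact: divr_gt0.
have t_le1 : t <= 1 by rewrite ler_pdivrMr // mul1r; lra.
have := bound t; rewrite t_gt0 t_le1 expr2 -[t * t * b]mulrA tb => /(_ isT).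
by have := mulr_gt0 t_gt0 a_gt0; lra.
Qed.

Section Projection.
Variables (R : realType) (n : nat).
Notation V := 'rV[R]_n.
Variables (X : set V) (P : V -> V).
Hypotheses (convX : Convex_set X) (projP : is_projection X P).

(* Compare P z with the points t y + (1 - t) P z of the segment towards y. *)
Lemma projection_obtuse z y : X y -> dotp (z - P z) (y - P z) <= 0.
Proof.
move=> Xy; have [XPz Pz_nearest] := projP z.
apply: (@le0_quadratic_bound _ _ (dotp (y - P z) (y - P z))) => t /andP[t_gt0 t_le1].
have Xt : X (t *: y + (1 - t) *: P z) by apply: convX => //; rewrite ltW.
have := enorm_le_sqr (Pz_nearest _ Xt); rewrite enorm_sqr.
have -> : dotp (z - (t *: y + (1 - t) *: P z)) (z - (t *: y + (1 - t) *: P z))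
  = dotp (z - P z) (z - P z) - 2 * t * dotp (z - P z) (y - P z)
    + t ^+ 2 * dotp (y - P z) (y - P z) by dotp_ring.
lra.
Qed.

Lemma projection_extragradient a b p q (gamma : R) : X b ->
  dotp (P (a - gamma *: p) - b) (P (a - gamma *: p) - b)
  <= dotp (a - b) (a - b)
     - dotp (P (a - gamma *: q) - a) (P (a - gamma *: q) - a)
     + gamma ^+ 2 * dotp (p - q) (p - q)
     + 2 * gamma * dotp p (b - P (a - gamma *: q)).
Proof.
move=> Xb; set c := P (a - gamma *: q); set d := P (a - gamma *: p).
have obtuse_c := projection_obtuse (a - gamma *: q) (proj1 (projP (a - gamma *: p))).
have obtuse_d := projection_obtuse (a - gamma *: p) Xb.
have young := dotpp_ge0 (gamma *: (p - q) - (c - d)).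
have -> : dotp (d - b) (d - b)
  = dotp (a - b) (a - b) - dotp (c - a) (c - a) + gamma ^+ 2 * dotp (p - q) (p - q)
    + 2 * gamma * dotp p (b - c)
    + 2 * dotp (a - gamma *: p - d) (b - d) + 2 * dotp (a - gamma *: q - c) (d - c)
    - dotp (gamma *: (p - q) - (c - d)) (gamma *: (p - q) - (c - d)) by dotp_ring.
lra.
Qed.

End Projection.

Lemma convex_slope_le (R : realType) (n : nat) (f : 'rV[R]_n -> R) x y (h : R) :
  Convex_fun f -> 0 < h <= 1 -> h^-1 * (f (h *: (x - y) + y) - f y) <= f x - f y.
Proof.
move=> convf /andP[h_gt0 h_le1].
have := convf x y h; rewrite ltW ?h_le1 // => /(_ isT).
have -> : h *: x + (1 - h) *: y = h *: (x - y) + y by apply/rowP => i; rewrite !mxE; ring.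
move=> le_conv; rewrite mulrC ler_pdivrMr //; nra.
Qed.

Lemma convex_gradient_le (R : realType) (n : nat) (f : 'rV[R]_n -> R) g x y :
  Convex_fun f -> is_gradient f g -> dotp (g y) (x - y) <= f x - f y.
Proof.
move=> convf gradf; have [dfy dfyE] := gradf y.
rewrite -dfyE -deriveE //.
apply: cvgr_to_le (cvg_dnbhs_at_right (diff_derivable (v := x - y) dfy)) _.
near=> h; apply: convex_slope_le => //.
apply/andP; split; near: h; [exact: nbhs_right_gt | exact: nbhs_right_le].
Unshelve. all: by end_near.
Qed.

Lemma Monotone_on_addZ_gradient_le (R : realType) (n : nat) (Y : set 'rV[R]_n)
    (F g : 'rV[R]_n -> 'rV[R]_n) (f : 'rV[R]_n -> R) (eta : R) x y :
  0 <= eta -> Monotone_on Y F -> Convex_fun f -> is_gradient f g -> Y x -> Y y ->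
  dotp (F y + eta *: g y) (x - y) <= - dotp (F x) (y - x) + eta * (f x - f y).
Proof.
move=> eta_ge0 monoF convf gradf Yx Yy.
have -> : dotp (F y + eta *: g y) (x - y) = dotp (F y) (x - y) + eta * dotp (g y) (x - y).
  by dotp_ring.
have := Monotone_on_dotp_le monoF Yx Yy.
have := ler_wpM2l eta_ge0 (convex_gradient_le x y convf gradf).
lra.
Qed.

Theorem lemma3p3 (R : realType) (n : nat) (X : set 'rV[R]_n)
  (F H : 'rV[R]_n -> 'rV[R]_n) (LF LH : R) (P : 'rV[R]_n -> 'rV[R]_n)
  (gamma : R) (eta : nat -> R) (x0 : 'rV[R]_n) (xs ys : nat -> 'rV[R]_n) :
  X !=set0 -> closed X -> Convex_set X ->
  Lipschitz_on X F LF -> Monotone_on X F ->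
  Lipschitz_on X H LH -> Monotone_on X H ->
  SOL (SOL X F) H !=set0 ->
  is_projection X P ->
  0 < gamma -> (forall k, 0 < eta k) -> X x0 ->
  xs 0%N = x0 ->
  (forall k, ys k.+1 = P (xs k - gamma *: (F (xs k) + eta k *: H (xs k)))) ->
  (forall k, xs k.+1 = P (xs k - gamma *: (F (ys k.+1) + eta k *: H (ys k.+1)))) ->
  forall x, X x ->
    (* (i) *)
    (forall k,
       enorm (xs k.+1 - x) ^+ 2 <=
         enorm (xs k - x) ^+ 2 - enorm (ys k.+1 - xs k) ^+ 2
         + 2 * gamma ^+ 2 * (LF ^+ 2 + eta k ^+ 2 * LH ^+ 2)
             * enorm (ys k.+1 - xs k) ^+ 2
         + 2 * gamma * dotp (F (ys k.+1) + eta k *: H (ys k.+1)) (x - ys k.+1))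
    /\
    (* (ii) *)
    ((forall k, gamma ^+ 2 * (LF ^+ 2 + eta k ^+ 2 * LH ^+ 2) <= 1 / 2) ->
     forall k,
       2 * gamma * dotp (F x + eta k *: H x) (ys k.+1 - x)
         <= enorm (xs k - x) ^+ 2 - enorm (xs k.+1 - x) ^+ 2)
    /\
    (* (iii) *)
    ((forall k, gamma ^+ 2 * (LF ^+ 2 + eta k ^+ 2 * LH ^+ 2) <= 1 / 2) ->
     forall (f : 'rV[R]_n -> R) (g : 'rV[R]_n -> 'rV[R]_n),
       Convex_fun f -> is_gradient f g -> Lipschitz_on setT g LH ->
       (forall y, X y -> H y = g y) ->
     forall k,
       2 * gamma * dotp (F x) (ys k.+1 - x)
         + 2 * gamma * eta k * (f (ys k.+1) - f x)
         <= enorm (xs k - x) ^+ 2 - enorm (xs k.+1 - x) ^+ 2).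
Proof.
move=> _ _ convX lipF monoF lipH monoH _ projP gamma_gt0 eta_gt0 Xx0 xs0 ys_step xs_step x Xx.
have Xxs k : X (xs k) by case: k => [|k]; rewrite ?xs0 ?xs_step //; exact: (projP _).1.
have Xys k : X (ys k.+1) by rewrite ys_step; exact: (projP _).1.
have part_i k :
    dotp (xs k.+1 - x) (xs k.+1 - x) <= dotp (xs k - x) (xs k - x)
      - dotp (ys k.+1 - xs k) (ys k.+1 - xs k)
      + 2 * gamma ^+ 2 * (LF ^+ 2 + eta k ^+ 2 * LH ^+ 2)
          * dotp (ys k.+1 - xs k) (ys k.+1 - xs k)
      + 2 * gamma * dotp (F (ys k.+1) + eta k *: H (ys k.+1)) (x - ys k.+1).
  have := projection_extragradient convX projP (xs k)
    (F (ys k.+1) + eta k *: H (ys k.+1)) (F (xs k) + eta k *: H (xs k)) gamma Xx.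
  rewrite -ys_step -xs_step.
  have := ler_wpM2l (sqr_ge0 gamma)
    (Lipschitz_on_addZ_sqr (eta k) lipF lipH (Xys k) (Xxs k)).
  lra.
have descent : (forall k, gamma ^+ 2 * (LF ^+ 2 + eta k ^+ 2 * LH ^+ 2) <= 1 / 2) ->
  forall k, dotp (xs k.+1 - x) (xs k.+1 - x) <= dotp (xs k - x) (xs k - x)
    + 2 * gamma * dotp (F (ys k.+1) + eta k *: H (ys k.+1)) (x - ys k.+1).
  move=> step_small k; have := part_i k.
  have := ler_wpM2r (dotpp_ge0 (ys k.+1 - xs k)) (step_small k).
  lra.
split; first by move=> k; rewrite !enorm_sqr.
split=> [step_small k | step_small f g convf gradf _ Hg k];
  rewrite !enorm_sqr; have := descent step_small k.
  have monoG := Monotone_on_addZ monoF monoH (ltW (eta_gt0 k)).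
  move: (Monotone_on_dotp_le monoG Xx (Xys k)) => /= /(ler_wpM2l (ltW gamma_gt0)).
  lra.
rewrite Hg //.
have := ler_wpM2l (ltW gamma_gt0)
  (Monotone_on_addZ_gradient_le (ltW (eta_gt0 k)) monoF convf gradf Xx (Xys k)).
lra.
Qed.
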